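(* Let $A$ be a ring and $B$ an $A$-algebra. Suppose that there is an injective flat ring homomorphism $A\to A'$ such that $B\otimes_A A'$ is flat over $A'$. Then the torsionless quotient $B^{tl}$ equals the image of the natural map $B\to B\otimes_A A'$, i.e. $\bigcap_g\ker(g)=\ker(B\to B\otimes_AA')$.
   Context: For an $A$-algebra $B$, its torsionless quotient is $B^{tl}=B/\bigcap_g\ker(g)$, where $g$ runs over all $A$-algebra homomorphisms $g\colon B\to P$ with $P$ a flat $A$-algebra. *)

From HB Require Import structures.
From mathcomp Require Import all_boot all_order all_algebra.
Set Implicit Arguments. Unset Strict Implicit. Unset Printing Implicit Defensive.
Import GRing.Theory.
Local Open Scope ring_scope.

(* Restriction of scalars: a ring S viewed as an R-module through a ring
   homomorphism f : R -> S, with r *: s := f r * s. *)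
Definition restr (R S : comPzRingType) (f : {rmorphism R -> S}) : Type := S.

Section Restr.
Variables (R S : comPzRingType) (f : {rmorphism R -> S}).
HB.instance Definition _ := GRing.Zmodule.on (restr f).
Definition restr_scale (r : R) (s : restr f) : restr f := (f r * (s : S) : S).
Fact restr_scalerA a b v :
  restr_scale a (restr_scale b v) = restr_scale (a * b) v.
Proof. by rewrite /restr_scale rmorphM mulrA. Qed.
Fact restr_scale1r : left_id 1 restr_scale.
Proof. by move=> v; rewrite /restr_scale rmorph1 mul1r. Qed.
Fact restr_scalerDr : right_distributive restr_scale +%R.
Proof. by move=> a u v; rewrite /restr_scale mulrDr. Qed.
Fact restr_scalerDl v : {morph restr_scale^~ v : a b / a + b}.
Proof. by move=> a b; rewrite /restr_scale rmorphD mulrDl. Qed.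
HB.instance Definition _ := GRing.Zmodule_isLmodule.Build R (restr f)
  restr_scalerA restr_scale1r restr_scalerDr restr_scalerDl.
End Restr.

Definition bilinear_map (R : comPzRingType) (M N P : lmodType R)
  (t : M -> N -> P) : Prop :=
  (forall n, linear (fun m => t m n)) /\ (forall m, linear (t m)).

Definition is_tensor (R : comPzRingType) (M N T : lmodType R)
  (t : M -> N -> T) : Prop :=
  bilinear_map t /\
  forall (P : lmodType R) (f : M -> N -> P), bilinear_map f ->
    exists h : {linear T -> P},
      (forall m n, h (t m n) = f m n) /\
      (forall h' : {linear T -> P}, (forall m n, h' (t m n) = f m n) ->
         forall x, h' x = h x).

Definition flat (R : comPzRingType) (M : lmodType R) : Prop :=
  forall (N N' : lmodType R) (f : {linear N -> N'}), injective f ->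
  forall (T : lmodType R) (t : M -> N -> T) (T' : lmodType R)
         (t' : M -> N' -> T'),
    is_tensor t -> is_tensor t' ->
    forall h : {linear T -> T'}, (forall m n, h (t m n) = t' m (f n)) ->
      injective h.

From HB Require Import structures.
From mathcomp Require Import all_boot all_order all_algebra.
From mathcomp Require Import boolp.
Set Implicit Arguments. Unset Strict Implicit. Unset Printing Implicit Defensive.
Import GRing.Theory.
Local Open Scope ring_scope.

(* If [jB b = 0] and [g : B -> P] is an A-algebra map to a flat A-algebra,
   then [g b (x) 1] vanishes in [P (x)_A A'], being the image of [jB b] under
   [B (x)_A A' -> P (x)_A A']. As [A -> A'] is injective and [P] is flat,
   [P = P (x)_A A -> P (x)_A A'] is injective, so [g b = 0]. Conversely,
   [B (x)_A A'] is itself a flat A-algebra, since flatness is transitive along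
   [A -> A' -> B (x)_A A']. *)

Section LinearFacts.
Variables (R : comPzRingType) (U V : lmodType R) (g : U -> V) (lg : linear g).

Lemma lin_add u v : g (u + v) = g u + g v.
Proof. by have := lg 1 u v; rewrite !scale1r. Qed.

Lemma lin0 : g 0 = 0.
Proof.
by have := lin_add 0 0; rewrite addr0 => e; apply: (addrI (g 0)); rewrite addr0 -e.
Qed.

Lemma lin_scale a u : g (a *: u) = a *: g u.
Proof. by have := lg a u 0; rewrite !addr0 lin0 addr0. Qed.
End LinearFacts.

Section Tensor.
Variables (R : comPzRingType) (M N : lmodType R).

Definition tsum (P : lmodType R) (f : M -> N -> P) (s : seq (M * N)) : P :=
  \sum_(p <- s) f p.1 p.2.

Definition tensor_equiv (s t : seq (M * N)) : Prop :=
  forall (P : lmodType R) (f : M -> N -> P), bilinear_map f -> tsum f s = tsum f t.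

Lemma tensor_equiv_refl s : tensor_equiv s s. Proof. by []. Qed.

Lemma tensor_equiv_sym s t : tensor_equiv s t -> tensor_equiv t s.
Proof. by move=> st P f hf; rewrite st. Qed.

Lemma tensor_equiv_trans s t u :
  tensor_equiv s t -> tensor_equiv t u -> tensor_equiv s u.
Proof. by move=> st tu P f hf; rewrite st ?tu. Qed.

Definition tcanon (s : seq (M * N)) : seq (M * N) :=
  xchoose (ex_intro (fun t => `[< tensor_equiv s t >]) s
                    (asboolT (tensor_equiv_refl s))).

Lemma tcanonP s : tensor_equiv s (tcanon s).
Proof. exact/asboolP/(xchooseP (ex_intro (fun t => `[< tensor_equiv s t >]) s _)). Qed.

Lemma eq_tcanon s t : tensor_equiv s t -> tcanon s = tcanon t.
Proof.
move=> st; apply: eq_xchoose => u; apply/asboolP/asboolP.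
  exact: tensor_equiv_trans (tensor_equiv_sym st).
exact: tensor_equiv_trans st.
Qed.

Lemma tcanon_idem s : tcanon (tcanon s) == tcanon s.
Proof. exact/eqP/eq_tcanon/tensor_equiv_sym/tcanonP. Qed.

(* [M (x)_R N] is the set of formal sums [\sum m_i (x) n_i], identified when
   every bilinear map agrees on them; [tcanon] picks a representative. *)
Definition tensor := {s : seq (M * N) | tcanon s == s}.
HB.instance Definition _ := [Choice of tensor by <:].

Definition tclass (s : seq (M * N)) : tensor := exist _ (tcanon s) (tcanon_idem s).

Definition teval (P : lmodType R) (f : M -> N -> P) (x : tensor) : P := tsum f (sval x).

Lemma teval_class (P : lmodType R) (f : M -> N -> P) s :
  bilinear_map f -> teval f (tclass s) = tsum f s.
Proof. by move=> hf; symmetry; apply: tcanonP. Qed.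

Lemma tclassK x : tclass (sval x) = x.
Proof. by case: x => s hs; apply: val_inj => /=; apply/eqP. Qed.

Lemma tensorP x y :
  (forall (P : lmodType R) (f : M -> N -> P), bilinear_map f -> teval f x = teval f y) ->
  x = y.
Proof.
move=> exy; rewrite -(tclassK x) -(tclassK y); apply: val_inj => /=.
by apply: eq_tcanon => P f hf; apply: exy.
Qed.

Definition tadd (x y : tensor) := tclass (sval x ++ sval y).
Definition tzero := tclass [::].
Definition tscale (r : R) (x : tensor) := tclass [seq (r *: p.1, p.2) | p <- sval x].
Definition topp (x : tensor) := tscale (-1) x.

Section Evaluation.
Variables (P : lmodType R) (f : M -> N -> P) (hf : bilinear_map f).

Lemma teval_add x y : teval f (tadd x y) = teval f x + teval f y.
Proof. by rewrite teval_class // /tsum big_cat. Qed.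

Lemma teval_zero : teval f tzero = 0.
Proof. by rewrite teval_class // /tsum big_nil. Qed.

Lemma teval_scale r x : teval f (tscale r x) = r *: teval f x.
Proof.
rewrite teval_class // /tsum big_map scaler_sumr; apply: eq_bigr => p _.
exact: lin_scale (hf.1 _) _ _.
Qed.

Lemma teval_opp x : teval f (topp x) = - teval f x.
Proof. by rewrite teval_scale scaleN1r. Qed.
End Evaluation.

Fact taddA : associative tadd.
Proof. by move=> x y z; apply: tensorP => P f hf; rewrite !teval_add // addrA. Qed.
Fact taddC : commutative tadd.
Proof. by move=> x y; apply: tensorP => P f hf; rewrite !teval_add // addrC. Qed.
Fact add0t : left_id tzero tadd.
Proof. by move=> x; apply: tensorP => P f hf; rewrite teval_add // teval_zero // add0r. Qed.
Fact addNt : left_inverse tzero topp tadd.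
Proof.
move=> x; apply: tensorP => P f hf.
by rewrite teval_add // teval_opp // teval_zero // addNr.
Qed.
HB.instance Definition _ := GRing.isZmodule.Build tensor taddA taddC add0t addNt.

Fact tscaleA a b x : tscale a (tscale b x) = tscale (a * b) x.
Proof. by apply: tensorP => P f hf; rewrite !teval_scale // scalerA. Qed.
Fact tscale1 : left_id 1 tscale.
Proof. by move=> x; apply: tensorP => P f hf; rewrite teval_scale // scale1r. Qed.
Fact tscaleDr : right_distributive tscale +%R.
Proof.
by move=> a x y; apply: tensorP => P f hf; rewrite !(teval_scale, teval_add) // scalerDr.
Qed.
Fact tscaleDl x : {morph tscale^~ x : a b / a + b}.
Proof.
by move=> a b; apply: tensorP => P f hf; rewrite !(teval_scale, teval_add) // scalerDl.
Qed.
HB.instance Definition _ := GRing.Zmodule_isLmodule.Build R tensor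
  tscaleA tscale1 tscaleDr tscaleDl.

Definition tens (m : M) (n : N) : tensor := tclass [:: (m, n)].

Section Lift.
Variables (P : lmodType R) (f : M -> N -> P) (hf : bilinear_map f).

Lemma teval_tens m n : teval f (tens m n) = f m n.
Proof. by rewrite teval_class // /tsum big_seq1. Qed.

Lemma teval_is_linear : linear (teval f).
Proof. by move=> a x y; rewrite [LHS]teval_add // teval_scale. Qed.

Definition tlift of bilinear_map f : tensor -> P := teval f.
HB.instance Definition _ :=
  GRing.isLinear.Build R tensor P *:%R (tlift hf) teval_is_linear.

Lemma tlift_tens m n : tlift hf (tens m n) = f m n. Proof. exact: teval_tens. Qed.
End Lift.

Lemma tens_bilinear : bilinear_map tens.
Proof.
split=> [n|m] a u v; apply: tensorP => P f hf;
  rewrite teval_add // teval_scale // !teval_tens //; [exact: hf.1 | exact: hf.2].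
Qed.

Lemma tensor_span x : x = \sum_(p <- sval x) tens p.1 p.2.
Proof.
apply: tensorP => P f hf.
rewrite -[RHS]/(tlift hf _) raddf_sum; apply: eq_bigr => p _; exact/esym/tlift_tens.
Qed.

Lemma eq_additive_tens (V : zmodType) (g h : {additive tensor -> V}) :
  (forall m n, g (tens m n) = h (tens m n)) -> g =1 h.
Proof.
move=> eqgh x; rewrite (tensor_span x) !raddf_sum.
by apply: eq_bigr => p _; apply: eqgh.
Qed.

Lemma tens_is_tensor : is_tensor tens.
Proof.
split; first exact: tens_bilinear.
move=> P f hf; exists (tlift hf); split; first exact: tlift_tens.
move=> h eqh; apply: eq_additive_tens => m n.
exact: etrans (eqh m n) (esym (tlift_tens hf m n)).
Qed.

End Tensor.

Arguments eq_additive_tens {R M N V} g h.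

Section LinearOf.
Variables (R : comPzRingType) (U V : lmodType R) (g : U -> V) (lg : linear g).
Definition linear_of of linear g : U -> V := g.
HB.instance Definition _ := GRing.isLinear.Build R U V *:%R (linear_of lg) lg.
End LinearOf.

Section TensorMap.
Variables (R : comPzRingType) (M N N' : lmodType R) (f : N -> N') (lf : linear f).

Lemma tmap_bilinear : bilinear_map (fun (m : M) n => tens m (f n)).
Proof.
split=> [n|m] a u v /=; first exact: (tens_bilinear M N').1.
by rewrite lf; exact: (tens_bilinear M N').2.
Qed.

Definition tmap : tensor M N -> tensor M N' := tlift tmap_bilinear.
HB.instance Definition _ := GRing.Linear.on tmap.

Lemma tmap_tens m n : tmap (tens m n) = tens m (f n). Proof. exact: tlift_tens. Qed.

Lemma flat_tmap_inj : flat M -> injective f -> injective tmap.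
Proof.
move=> flatM finj.
exact: (flatM N N' (linear_of lf) finj _ _ _ _
  (tens_is_tensor M N) (tens_is_tensor M N') tmap tmap_tens).
Qed.
End TensorMap.

Arguments tmap {R} M {N N' f} lf.

Lemma is_tensor_ext (R : comPzRingType) (M N X P : lmodType R) (t : M -> N -> X)
    (tX : is_tensor t) (h1 h2 : {linear X -> P}) :
  (forall m n, h1 (t m n) = h2 (t m n)) -> h1 =1 h2.
Proof.
move=> eqh.
have bil : bilinear_map (fun m n => h1 (t m n)).
  by split=> [n|m] a u v /=; [rewrite tX.1.1 | rewrite tX.1.2]; rewrite linearP.
have [h [_ hu]] := tX.2 P _ bil.
by move=> x; rewrite (hu h1) // (hu h2).
Qed.

(* Flatness quantifies over all tensor products; it suffices to test it on
   the concrete one, which is isomorphic to any other. *)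
Lemma flat_of_tmap_inj (R : comPzRingType) (M : lmodType R) :
  (forall (N N' : lmodType R) (f : N -> N') (lf : linear f), injective f ->
     injective (tmap M lf)) -> flat M.
Proof.
move=> tmap_inj N N' f finj X t X' t' tX tX' h ht x y hxy.
have [u [ut _]] := tX.2 _ _ (tens_bilinear M N).
have [u' [ut' _]] := tX'.2 _ _ (tens_bilinear M N').
have uK : cancel u (tlift tX.1).
  move=> z; apply: (is_tensor_ext tX (h1 := tlift tX.1 \o u) (h2 := idfun)) => m n /=.
  by rewrite ut tlift_tens.
have lf : linear f by move=> a ? ?; rewrite linearP.
have u'h : forall z, u' (h z) = tmap M lf (u z).
  move=> z; apply: (is_tensor_ext tX (h1 := u' \o h) (h2 := tmap M lf \o u)) => m n /=.
  by rewrite ht ut' ut tmap_tens.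
rewrite -(uK x) -(uK y); congr tlift; apply: (tmap_inj _ _ _ lf finj).
by rewrite -!u'h hxy.
Qed.

Section TensorScalarExtension.
Variables (R S : comPzRingType) (M N : lmodType R) (act : S -> M -> M).
Hypotheses (act_linear : forall s, linear (act s))
  (actA : forall s1 s2 m, act s1 (act s2 m) = act (s1 * s2) m)
  (act1 : forall m, act 1 m = m)
  (actDl : forall s1 s2 m, act (s1 + s2) m = act s1 m + act s2 m).

Lemma tact_bilinear s : bilinear_map (fun m n => tens (N := N) (act s m) n).
Proof.
split=> [n|m] a u v /=; last exact: (tens_bilinear M N).2.
by rewrite act_linear; exact: (tens_bilinear M N).1.
Qed.

Definition tact s : tensor M N -> tensor M N := tlift (tact_bilinear s).
HB.instance Definition _ s := GRing.Linear.on (tact s).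

Lemma tact_tens s m n : tact s (tens m n) = tens (act s m) n.
Proof. exact: tlift_tens. Qed.

(* The type depends on the action and its axioms only so that the S-module
   structure below can be declared canonical for it. *)
Definition stensor : Type := (fun _ _ _ _ => tensor M N) act_linear actA act1 actDl.
HB.instance Definition _ := GRing.Zmodule.on stensor.

Fact tactA a b x : tact a (tact b x) = tact (a * b) x.
Proof.
apply: (eq_additive_tens (tact a \o tact b) (tact (a * b))) => m n /=.
by rewrite !tact_tens actA.
Qed.

Fact tact1 : left_id 1 tact.
Proof.
by move=> x; apply: (eq_additive_tens (tact 1) idfun) => m n /=; rewrite tact_tens act1.
Qed.

Fact tactDr : right_distributive tact +%R.
Proof. by move=> a x y; rewrite raddfD. Qed.

Fact tactDl x : {morph tact^~ x : a b / a + b}.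
Proof.
move=> a b; apply: (eq_additive_tens (tact (a + b)) (tact a \+ tact b)) => m n /=.
by rewrite !tact_tens actDl (lin_add ((tens_bilinear M N).1 n)).
Qed.

HB.instance Definition _ := GRing.Zmodule_isLmodule.Build S stensor
  tactA tact1 tactDr tactDl.

Lemma tact_rmorph (phi : {rmorphism R -> S}) :
  (forall r m, act (phi r) m = r *: m) -> forall r x, tact (phi r) x = r *: x.
Proof.
move=> act_phi r; apply: (eq_additive_tens (tact (phi r)) ( *:%R r)) => m n /=.
by rewrite tact_tens act_phi (lin_scale ((tens_bilinear M N).1 n)).
Qed.
End TensorScalarExtension.

Section RestrictScalars.
Variables (R S : comPzRingType) (phi : {rmorphism R -> S}) (V : lmodType S).

Definition restr_lmod : Type := (fun _ => V) phi.
HB.instance Definition _ := GRing.Zmodule.on restr_lmod.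

Definition restr_lmod_scale (r : R) (v : restr_lmod) : restr_lmod := (phi r *: (v : V) : V).
Fact restr_lmod_scaleA a b v :
  restr_lmod_scale a (restr_lmod_scale b v) = restr_lmod_scale (a * b) v.
Proof. by rewrite /restr_lmod_scale rmorphM scalerA. Qed.
Fact restr_lmod_scale1 : left_id 1 restr_lmod_scale.
Proof. by move=> v; rewrite /restr_lmod_scale rmorph1 scale1r. Qed.
Fact restr_lmod_scaleDr : right_distributive restr_lmod_scale +%R.
Proof. by move=> a u v; rewrite /restr_lmod_scale scalerDr. Qed.
Fact restr_lmod_scaleDl v : {morph restr_lmod_scale^~ v : a b / a + b}.
Proof. by move=> a b; rewrite /restr_lmod_scale rmorphD scalerDl. Qed.
HB.instance Definition _ := GRing.Zmodule_isLmodule.Build R restr_lmod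
  restr_lmod_scaleA restr_lmod_scale1 restr_lmod_scaleDr restr_lmod_scaleDl.
End RestrictScalars.

Lemma restrZ (R S : comPzRingType) (f : {rmorphism R -> S}) (r : R) (m : restr f) :
  r *: m = (f r * (m : S) : S) :> S.
Proof. by []. Qed.

Section RingAction.
Variables (R S U : comPzRingType) (rho : {rmorphism S -> U}) (f : {rmorphism R -> U}).

Definition ract (s : S) (m : restr f) : restr f := (rho s * (m : U) : U).

Lemma ract_linear s : linear (ract s).
Proof. by move=> a u v; rewrite /ract /= !restrZ mulrDr mulrCA. Qed.
Lemma ractA s1 s2 m : ract s1 (ract s2 m) = ract (s1 * s2) m.
Proof. by rewrite /ract rmorphM mulrA. Qed.
Lemma ract1 m : ract 1 m = m.
Proof. by rewrite /ract rmorph1 mul1r. Qed.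
Lemma ractDl s1 s2 m : ract (s1 + s2) m = ract s1 m + ract s2 m.
Proof. by rewrite /ract rmorphD mulrDl. Qed.
End RingAction.

Arguments ract_linear {R S U} rho f s.
Arguments ractA {R S U} rho f.
Arguments ract1 {R S U} rho f.
Arguments ractDl {R S U} rho f.

(* [U (x)_R N] is recovered from [U (x)_S (S (x)_R N)], and tensoring with [U]
   over [S] and with [S] over [R] both preserve injectivity. *)
Section FlatComp.
Variables (R S U : comPzRingType) (phi : {rmorphism R -> S}) (psi : {rmorphism S -> U}).
Hypotheses (phi_flat : flat (restr phi)) (psi_flat : flat (restr psi)).

Local Notation M := (restr (psi \o phi)).
Local Notation SN N := (stensor N (ract_linear idfun phi) (ractA idfun phi)
  (ract1 idfun phi) (ractDl idfun phi)).
Local Notation UN N := (stensor N (ract_linear psi (psi \o phi))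
  (ractA psi (psi \o phi)) (ract1 psi (psi \o phi)) (ractDl psi (psi \o phi))).
Local Notation tactS N := (tact (N := N) (ract_linear idfun phi)).
Local Notation tactU N := (tact (N := N) (ract_linear psi (psi \o phi))).

Section BaseChangeAssoc.
Variable N : lmodType R.
Local Notation Y := (tensor (restr psi) (SN N)).

Lemma to_assoc_bilinear :
  bilinear_map (fun (m : M) (n : N) =>
    (tens (m : restr psi) (tens (1 : restr phi) n : SN N)
                                        : restr_lmod phi Y)).
Proof.
split=> [n|m] a u v /=; first exact: ((tens_bilinear (restr psi) (SN N)).1 _ (phi a) u v).
rewrite (tens_bilinear (restr phi) N).2.
rewrite -(tact_rmorph (ract_linear idfun phi) (fun r m => erefl)).
exact: ((tens_bilinear (restr psi) (SN N)).2 m (phi a) _ _).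
Qed.

Definition to_assoc : tensor M N -> Y := tlift to_assoc_bilinear.
HB.instance Definition _ := GRing.Additive.copy to_assoc (tlift to_assoc_bilinear).

Lemma scale_left_bilinear (u : restr psi) :
  bilinear_map (fun (s : restr phi) (n : N) => tens (psi s * u : M) n).
Proof.
split=> [n|n] a s s' /=; last exact: (tens_bilinear M N).2.
have -> : psi (a *: s + s') * u = psi (phi a) * (psi s * u) + psi s' * u :> U.
  by rewrite restrZ rmorphD rmorphM mulrDl mulrA.
exact: ((tens_bilinear M N).1 n a _ _).
Qed.

Definition scale_left (u : restr psi) : tensor (restr phi) N -> tensor M N :=
  tlift (scale_left_bilinear u).
HB.instance Definition _ u := GRing.Linear.on (scale_left u).

Lemma scale_left_tens u s n : scale_left u (tens s n) = tens (psi s * u : M) n.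
Proof. exact: tlift_tens. Qed.

Lemma scale_left_tact u s q :
  scale_left u (tactS N s q) =
  tactU N s (scale_left u q).
Proof.
apply: (eq_additive_tens (scale_left u \o tactS N s) (tactU N s \o scale_left u)).
move=> s0 n /=.
by rewrite tact_tens !scale_left_tens tact_tens /ract rmorphM mulrA.
Qed.

Lemma scale_left_linear s (u u' : restr psi) q :
  scale_left (s *: u + u') q =
  tactU N s (scale_left u q) + scale_left u' q.
Proof.
apply: (eq_additive_tens (scale_left (s *: u + u'))
          (tactU N s \o scale_left u \+ scale_left u')) => s0 n /=.
rewrite !scale_left_tens tact_tens /ract.
have -> : psi s0 * (s *: u + u') = psi s * (psi s0 * u) + psi s0 * u' :> U.
  by rewrite restrZ mulrDr mulrCA.
exact: (lin_add ((tens_bilinear M N).1 n)).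
Qed.

Lemma from_assoc_bilinear :
  bilinear_map (fun (u : restr psi) (q : SN N) => (scale_left u q : UN N)).
Proof.
split=> [q|u] a v w /=; first exact: scale_left_linear.
by rewrite linearD; congr (_ + _); exact: scale_left_tact.
Qed.

Definition from_assoc : Y -> UN N := tlift from_assoc_bilinear.
HB.instance Definition _ := GRing.Linear.on from_assoc.

Lemma to_assocK : cancel to_assoc from_assoc.
Proof.
apply: (eq_additive_tens (from_assoc \o to_assoc) idfun) => m n /=.
by rewrite [to_assoc _]tlift_tens [from_assoc _]tlift_tens scale_left_tens rmorph1 mul1r.
Qed.
End BaseChangeAssoc.

Section FlatCompTmap.
Variables (N N' : lmodType R) (f : N -> N') (lf : linear f).

Lemma tmap_tactS s x : tmap (restr phi) lf (tactS N s x) = tactS N' s (tmap _ lf x).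
Proof.
apply: (eq_additive_tens (tmap _ lf \o tactS N s) (tactS N' s \o tmap _ lf)) => m n /=.
by rewrite tact_tens !tmap_tens tact_tens.
Qed.

Lemma tmapS_linear : linear (tmap (restr phi) lf : SN N -> SN N').
Proof. by move=> a x y; rewrite linearD; congr (_ + _); exact: tmap_tactS. Qed.

Lemma to_assoc_tmap z :
  tmap (restr psi) tmapS_linear (to_assoc z) = to_assoc (tmap M lf z).
Proof.
apply: (eq_additive_tens (tmap _ tmapS_linear \o to_assoc (N := N))
                         (to_assoc (N := N') \o tmap M lf)).
move=> m n /=.
by rewrite tmap_tens [to_assoc _]tlift_tens tmap_tens [to_assoc _]tlift_tens tmap_tens.
Qed.

Lemma flat_comp_tmap_inj : injective f -> injective (tmap M lf).
Proof.
move=> finj z1 z2 eqz; rewrite -(to_assocK z1) -(to_assocK z2); congr from_assoc.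
have tmapS_inj := flat_tmap_inj (lf := tmapS_linear) psi_flat (flat_tmap_inj phi_flat finj).
by apply: tmapS_inj; rewrite !to_assoc_tmap eqz.
Qed.
End FlatCompTmap.

Lemma flat_comp : flat (restr (psi \o phi)).
Proof. apply: flat_of_tmap_inj => N N' f lf; exact: flat_comp_tmap_inj. Qed.
End FlatComp.

Lemma flat_tens1_eq0 (A A' P : comPzRingType) (iA' : {rmorphism A -> A'})
    (iP : {rmorphism A -> P}) :
  injective iA' -> flat (restr iP) ->
  forall p : P, tens (p : restr iP) (1 : restr iA') = 0 -> p = 0.
Proof.
move=> iA'_inj flatP p p1_eq0.
pose A0 := restr (@idfun A).
have iA'_linear : linear (iA' : A0 -> restr iA').
  by move=> a u v; rewrite /= rmorphD !restrZ rmorphM.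
have p1_eq0_A : tens (p : restr iP) (1 : A0) = 0.
  apply: (flat_tmap_inj (lf := iA'_linear) flatP iA'_inj).
  rewrite linear0 tmap_tens /=.
  by rewrite rmorph1.
(* [P (x)_A A = P] through the multiplication map. *)
have mul_bilinear : bilinear_map (fun (q : restr iP) (a : A0) => (a *: q : restr iP)).
  split=> [a|q] b u v /=; first by rewrite scalerDr !scalerA mulrC.
  by rewrite scalerDl -scalerA.
have := tlift_tens mul_bilinear (p : restr iP) (1 : A0).
by rewrite p1_eq0_A linear0 scale1r.
Qed.

Lemma base_change_ker_sub (A A' B T P : comPzRingType)
    (iA' : {rmorphism A -> A'}) (iB : {rmorphism A -> B}) (iP : {rmorphism A -> P})
    (jB : {rmorphism B -> T}) (jA' : {rmorphism A' -> T}) (g : {rmorphism B -> P}) :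
  injective iA' -> flat (restr iP) ->
  is_tensor (M := restr iB) (N := restr iA') (T := restr (jA' \o iA'))
            (fun b a' => jB b * jA' a') ->
  (forall a, g (iB a) = iP a) ->
  forall b, jB b = 0 -> g b = 0.
Proof.
move=> iA'_inj flatP T_tensor g_iB b jb0.
have gtens_bilinear :
    bilinear_map (fun (b : restr iB) (a' : restr iA') => tens (g b : restr iP) a').
  split=> [a'|b'] a u v /=; last exact: (tens_bilinear (restr iP) (restr iA')).2.
  have -> : g (a *: u + v) = (a *: (g u : restr iP) + g v : restr iP).
    by rewrite !restrZ rmorphD rmorphM g_iB.
  exact: (tens_bilinear (restr iP) (restr iA')).1.
have [k [k_tens _]] := T_tensor.2 _ _ gtens_bilinear.
apply: (flat_tens1_eq0 iA'_inj flatP).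
by rewrite -k_tens jb0 mul0r linear0.
Qed.

Theorem proposition5p4
  (A A' B T : comPzRingType)
  (iA' : {rmorphism A -> A'}) (iB : {rmorphism A -> B})
  (iA'_inj : injective iA') (A'_flat : flat (restr iA'))
  (jB : {rmorphism B -> T}) (jA' : {rmorphism A' -> T})
  (j_comm : forall a, jB (iB a) = jA' (iA' a))
  (T_tensor : is_tensor (M := restr iB) (N := restr iA')
                        (T := restr (jA' \o iA'))
                        (fun b a' => jB b * jA' a'))
  (T_flat : flat (restr jA')) :
  forall b : B,
    (forall (P : comPzRingType) (iP : {rmorphism A -> P}),
       flat (restr iP) ->
       forall g : {rmorphism B -> P}, (forall a, g (iB a) = iP a) -> g b = 0)
    <-> jB b = 0.
Proof.
move=> b; split=> [ker_flat | jb0 P iP flatP g g_iB].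
  exact: (ker_flat T (jA' \o iA') (flat_comp A'_flat T_flat) jB j_comm).
exact: (base_change_ker_sub iA'_inj flatP T_tensor g_iB jb0).
Qed.
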